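(* Let $R$ be a uniform $L$-layered $1$-semifield$^\dagger$ and $a\in R$. Let $f=\sum_{i=0}^m (a^i)^{[\ell_i]}\lambda^{m-i}$ and $g=\sum_{j=0}^n (a^j)^{[k_j]}\lambda^{n-j}$ (so $f$ and $g$ are both $a$-primary). Then $|\Re(f,g)|$ is the element of $\mathcal{G}$-value $a^{mn}$ whose layer $\ell'$ is the permanent of the $(m+n)\times(m+n)$ matrix of the layers of the entries of the Sylvester matrix $\Re(f,g)$.
   Context: Concretely, $R=R(L,\mathcal{G})$ with $L$ a totally ordered commutative semiring$^\dagger$ (semiring without necessarily a zero; for layers of zero entries one adjoins $0$ to $L$) and $\mathcal{G}$ a totally ordered abelian group; elements are $x^{[\ell]}$ ($x\in\mathcal{G}$, layer $\ell$), with $x^{[k]}y^{[\ell]}=(xy)^{[k\ell]}$ and $x^{[k]}+y^{[\ell]}$ equal to $x^{[k]}$ if $x>y$, $y^{[\ell]}$ if $x<y$, $x^{[k+\ell]}$ if $x=y$; $(c)^{[\ell]}$ denotes the element with the $\mathcal{G}$-value of $c$ and layer $\ell$. A zero element $\mathbb{0}_R$ (additive identity, multiplicatively absorbing, layer $0$) is formally adjoined. The layered permanent of an $N\times N$ matrix $A=(a_{ij})$ is $|A|=\sum_{\sigma\in S_N}a_{1,\sigma(1)}\cdots a_{N,\sigma(N)}$. For $f=\sum_{i=0}^m\alpha_i\lambda^i$, $A_n(f)$ is the $n\times(m+n)$ matrix whose $r$-th row is $(\mathbb{0},\dots,\mathbb{0},\alpha_0,\alpha_1,\dots,\alpha_m,\mathbb{0},\dots,\mathbb{0})$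 with $r-1$ leading zeros; for $g$ of degree $n\ge1$ the Sylvester matrix is $\Re(f,g)=\binom{A_n(f)}{A_m(g)}$ and the resultant is $|\Re(f,g)|$ (for constant $f=\alpha_0$ it is $\alpha_0^n$, and symmetrically). The permanent of the layer matrix is computed in $L$ (with ordinary sums and products). *)

From HB Require Import structures.
From mathcomp Require Import all_boot all_order all_algebra all_fingroup.
Set Implicit Arguments. Unset Strict Implicit. Unset Printing Implicit Defensive.
Import GRing.Theory.
Local Open Scope ring_scope.

Record layerSemiring := LayerSemiring {
  lcar :> Type;
  ladd : lcar -> lcar -> lcar;
  lmul : lcar -> lcar -> lcar;
  lone : lcar;
  lle  : lcar -> lcar -> bool;
  laddA : forall x y z, ladd x (ladd y z) = ladd (ladd x y) z;
  laddC : forall x y, ladd x y = ladd y x;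
  lmulA : forall x y z, lmul x (lmul y z) = lmul (lmul x y) z;
  lmulC : forall x y, lmul x y = lmul y x;
  lmul1 : forall x, lmul lone x = x;
  lmulDl : forall x y z, lmul (ladd x y) z = ladd (lmul x z) (lmul y z);
  lle_refl : forall x, lle x x;
  lle_anti : forall x y, lle x y -> lle y x -> x = y;
  lle_trans : forall x y z, lle x y -> lle y z -> lle x z;
  lle_total : forall x y, lle x y || lle y x;
  lle_add : forall x y z, lle x y -> lle (ladd x z) (ladd y z);
  lle_mul : forall x y z, lle x y -> lle (lmul x z) (lmul y z)
}.

(* The group G is written additively: a zmodType with a total order    *)
Definition total_order_group (G : zmodType) (le : rel G) : Prop :=
  [/\ forall x, le x x,
      forall x y, le x y -> le y x -> x = y,
      forall x y z, le x y -> le y z -> le x z,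
      forall x y, le x y || le y x
    & forall x y z, le x y -> le (x + z) (y + z)].

(* The uniform layered 1-semifield R(L,G) with a formally adjoined      *)
(* zero: None is the zero, Some (x, l) is x^[l].                         *)
Section Layered.
Variables (L : layerSemiring) (G : zmodType) (leG : rel G).

Definition lay := option (G * L).

Definition lzero : lay := None.
Definition lone_ : lay := Some (0, lone L).

Definition lay_add (u v : lay) : lay :=
  match u, v with
  | None, _ => v
  | _, None => u
  | Some (x, k), Some (y, l) =>
      if x == y then Some (x, ladd k l)
      else if leG y x then Some (x, k) else Some (y, l)
  end.

Definition lay_mul (u v : lay) : lay :=
  match u, v with
  | Some (x, k), Some (y, l) => Some (x + y, lmul k l)
  | _, _ => None
  end.

Fixpoint lay_exp (u : lay) (i : nat) : lay :=
  match i with 0 => lone_ | i.+1 => lay_mul u (lay_exp u i) end.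

(* G-value of a nonzero element (default 0 for the zero element) *)
Definition lgval (u : lay) : G := if u is Some (x, _) then x else 0.

(* layer of an element, in L with 0 adjoined (None = layer 0) *)
Definition layer (u : lay) : option L := omap snd u.

(* (c)^[l] : the element with G-value of c and layer l (c nonzero) *)
Definition with_layer (c : lay) (l : L) : lay := Some (lgval c, l).

Definition lay_perm N (A : 'M[lay]_N) : lay :=
  \big[lay_add/lzero]_(s : 'S_N) \big[lay_mul/lone_]_(i < N) A i (s i).

(* Sylvester matrix: f = sum_{i<=m} alpha i * lambda^i,
   g = sum_{j<=n} beta j * lambda^j; rows of A_n(f) then rows of A_m(g). *)
Definition sylvester (m n : nat) (alpha beta : nat -> lay) : 'M[lay]_(n + m) :=
  \matrix_(r < n + m, c < n + m)
    if (r < n)%N then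
      (if (r <= c <= r + m)%N then alpha (c - r)%N else lzero)
    else
      (if (r - n <= c <= r - n + n)%N then beta (c - (r - n))%N else lzero).

End Layered.

Section LayerZero.
Variable L : layerSemiring.
Definition l0add (u v : option L) : option L :=
  match u, v with
  | None, _ => v | _, None => u | Some a, Some b => Some (ladd a b) end.
Definition l0mul (u v : option L) : option L :=
  match u, v with Some a, Some b => Some (lmul a b) | _, _ => None end.
Definition l0perm N (A : 'M[option L]_N) : option L :=
  \big[l0add/None]_(s : 'S_N) \big[l0mul/Some (lone L)]_(i < N) A i (s i).
End LayerZero.

From mathcomp Require Import all_boot all_order all_algebra all_fingroup.
From mathcomp Require Import zify.
Set Implicit Arguments. Unset Strict Implicit. Unset Printing Implicit Defensive.
Import GRing.Theory.
Local Open Scope ring_scope.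

(* Write a = x^[la].  The entry of the Sylvester matrix in row r and column c
   has G-value x^(w r - c), where w r = r + m on the rows of f and w r = r on
   the rows of g.  Along any permutation the exponents therefore add up to
   sum_r w r - sum_r r = nm, so all nonzero terms of the permanent share the
   G-value x^(nm); summing elements of equal G-value just adds their layers,
   which gives the permanent of the layer matrix.  The diagonal term is
   nonzero, so the result is not the zero element. *)

Section LayerArithmetic.
Variables (L : layerSemiring) (G : zmodType).

Definition with_gval (c : G) : option L -> lay L G := omap (pair c).

Lemma lay_add_with_gval (leG : rel G) (c : G) :
  {morph with_gval c : u v / l0add u v >-> lay_add leG u v}.
Proof. by case=> [u|] [v|] //=; rewrite eqxx. Qed.

Lemma lay_exp_Some (x : G) (la : L) j :
  exists t, lay_exp (Some (x, la)) j = Some (x *+ j, t).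
Proof.
elim: j => [|j [t IH]] /=; first by exists (lone L); rewrite mulr0n.
by rewrite IH; exists (lmul la t); rewrite mulrS.
Qed.

Lemma lgval_lay_exp (x : G) (la : L) j : lgval (lay_exp (Some (x, la)) j) = x *+ j.
Proof. by have [t ->] := lay_exp_Some x la j. Qed.

Lemma big_lay_mul_graded (I : eqType) (r : seq I) (F : I -> lay L G)
    (e : I -> nat) (x : G) :
  (forall i g l, F i = Some (g, l) -> g = x *+ e i) ->
  \big[@lay_mul L G/lone_ L G]_(i <- r) F i =
  with_gval (x *+ (\sum_(i <- r) e i))
            (\big[@l0mul L/Some (lone L)]_(i <- r) layer (F i)).
Proof.
move=> gradedF; elim: r => [|i r IH]; first by rewrite !big_nil /= mulr0n.
rewrite !big_cons IH; case Fi: (F i) => [[g l]|] //=.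
rewrite (gradedF _ _ _ Fi).
by case: (\big[@l0mul L/_]_(j <- r) _) => //= t; rewrite mulrnDr.
Qed.

Lemma big_l0mul_neq_None (I : eqType) (r : seq I) (F : I -> option L) :
  \big[@l0mul L/Some (lone L)]_(i <- r) F i <> None <->
  (forall i, i \in r -> F i <> None).
Proof.
elim: r => [|j r IH]; first by rewrite big_nil.
rewrite big_cons; split.
- case Fj: (F j) => [u|] //; case P: (\big[@l0mul L/_]_(i <- r) _) => [v|] // _.
  move=> i; rewrite in_cons => /orP[/eqP-> | ri]; first by rewrite Fj.
  by apply: IH.1 i ri; rewrite P.
- move=> nzF; have := nzF j (mem_head _ _).
  have := IH.2 (fun i ri => nzF i (mem_behead (s := j :: r) ri)).
  by case: (\big[@l0mul L/_]_(i <- r) _) => // u _; case: (F j).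
Qed.

Lemma big_l0add_neq_None (I : eqType) (r : seq I) (F : I -> option L) i0 :
  i0 \in r -> F i0 <> None -> \big[@l0add L/None]_(i <- r) F i <> None.
Proof.
elim: r => [|j r IH] //; rewrite big_cons in_cons => /orP[/eqP-> | ri] nzF.
  by case: (F j) nzF => //= u _; case: (\big[@l0add L/_]_(i <- r) _).
by have := IH ri nzF; case: (\big[@l0add L/_]_(i <- r) _) => // u _; case: (F j).
Qed.

End LayerArithmetic.

Section Sylvester.
Variables (L : layerSemiring) (G : zmodType) (x : G) (m n : nat).

Definition primary_coefs (d : nat) (alpha : nat -> lay L G) : Prop :=
  forall i, (i <= d)%N -> exists l, alpha i = Some (x *+ (d - i), l).

Variables (alpha beta : nat -> lay L G).
Hypotheses (alpha_primary : primary_coefs m alpha)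
           (beta_primary : primary_coefs n beta).

Let S := sylvester m n alpha beta.

Definition sylvester_row_deg (r : nat) : nat := r + (if (r < n)%N then m else 0).

Lemma sylvester_gval r c g l : S r c = Some (g, l) ->
  (c <= sylvester_row_deg r)%N /\ g = x *+ (sylvester_row_deg r - c).
Proof.
rewrite /S /sylvester_row_deg mxE; case: ifP => rn; case: ifP => // /andP[cr rc].
- have [|l' ->] := alpha_primary (i := (c - r)%N); first lia.
  by case=> <- _; split; [lia | congr (x *+ _); lia].
- have [|l' ->] := beta_primary (i := (c - (r - n))%N); first lia.
  by case=> <- _; split; [lia | congr (x *+ _); lia].
Qed.

Lemma sum_sylvester_row_deg :
  (\sum_(i < n + m) sylvester_row_deg i = \sum_(i < n + m) i + n * m)%N.
Proof.
rewrite /sylvester_row_deg big_split /=; congr (_ + _)%N.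
rewrite big_split_ord /= [X in (_ + X)%N]big1 => [|i _]; last by rewrite ltnNge leq_addr.
by rewrite addn0 (eq_bigr (fun=> m)) => [|i _]; rewrite ?ltn_ord // sum_nat_const card_ord.
Qed.

Lemma sylvester_term (s : 'S_(n + m)) :
  \big[@lay_mul L G/lone_ L G]_(i < n + m) S i (s i) =
  with_gval (x *+ (m * n)) (\big[@l0mul L/Some (lone L)]_(i < n + m) layer (S i (s i))).
Proof.
rewrite (@big_lay_mul_graded _ _ _ _ _ (fun i : 'I_(n + m) => sylvester_row_deg i - s i)%N x);
  last by move=> i g l /sylvester_gval[_ ->].
case P: (\big[@l0mul L/_]_(i <- _) _) => [q|] //=.
have sr_le i : (s i <= sylvester_row_deg i)%N.
  have /big_l0mul_neq_None nz : \big[@l0mul L/Some (lone L)]_(i < n + m)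
    layer (S i (s i)) <> None by rewrite P.
  by move: (nz i (mem_index_enum _)); case E: (S i (s i)) => [[g l]|] // _;
     case: (sylvester_gval E).
have sum_s : (\sum_(i < n + m) s i = \sum_(i < n + m) i)%N.
  by rewrite [RHS](reindex_inj (@perm_inj _ s)).
have split_deg : (\sum_(i < n + m) (sylvester_row_deg i - s i) + \sum_(i < n + m) s i
                  = \sum_(i < n + m) sylvester_row_deg i)%N.
  by rewrite -big_split; apply: eq_bigr => i _; exact: subnK.
have sum_e : (\sum_(i < n + m) (sylvester_row_deg i - s i) = m * n)%N.
  by move: split_deg; rewrite sum_s sum_sylvester_row_deg; lia.
by rewrite sum_e.
Qed.

Lemma sylvester_diag_neq_None :
  \big[@l0mul L/Some (lone L)]_(i < n + m) layer (S i i) <> None.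
Proof.
apply/big_l0mul_neq_None => i _; rewrite /S mxE; case: ifP => rn.
- have [|l ->] := alpha_primary (i := (i - i)%N); first lia.
  by rewrite leqnn leq_addr.
- have [|l ->] := beta_primary (i := (i - (i - n))%N); first lia.
  by rewrite leq_subr /= subnK ?leqnn // leqNgt rn.
Qed.

Lemma lay_perm_sylvester (leG : rel G) :
  lay_perm leG S = with_gval (x *+ (m * n)) (l0perm (map_mx (@layer L G) S)) /\
  l0perm (map_mx (@layer L G) S) <> None.
Proof.
rewrite /lay_perm /l0perm (eq_bigr _ (fun s _ => sylvester_term s)).
under [in X in _ = X /\ _]eq_bigr do under eq_bigr do rewrite mxE.
under [in X in X <> None]eq_bigr do under eq_bigr do rewrite mxE.
split; first exact/esym/(big_morph _ (lay_add_with_gval leG _) erefl).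
apply: (@big_l0add_neq_None _ _ _ _ 1%g); first exact: mem_index_enum.
by under eq_bigr do rewrite perm1; exact: sylvester_diag_neq_None.
Qed.

End Sylvester.

Lemma with_layer_exp_primary (L : layerSemiring) (G : zmodType) (x : G) (la : L)
    (d : nat) (ell : nat -> L) :
  primary_coefs x d (fun i => with_layer (lay_exp (Some (x, la)) (d - i)) (ell (d - i)%N)).
Proof. by move=> i id; exists (ell (d - i)%N); rewrite /with_layer lgval_lay_exp. Qed.

(* The order on G is never consulted: all nonzero terms of the permanent have
   the same G-value. *)
Theorem lemma8p5 (L : layerSemiring) (G : zmodType) (leG : rel G)
  (HG : total_order_group leG)
  (a : lay L G) (Ha : a <> lzero L G)
  (m n : nat) (ell k : nat -> L) :
  let alpha := fun i : nat => with_layer (lay_exp a (m - i)%N) (ell (m - i)%N) in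
  let beta  := fun j : nat => with_layer (lay_exp a (n - j)%N) (k (n - j)%N) in
  let S := sylvester m n alpha beta in
  exists l : L,
    l0perm (map_mx (@layer L G) S) = Some l /\
    lay_perm leG S = Some (lgval (lay_exp a (m * n)%N), l).
Proof.
case: a Ha => [[x la]|] // _ alpha beta S.
have [-> nz] := lay_perm_sylvester (with_layer_exp_primary x la (d := m) ell)
                                   (with_layer_exp_primary x la (d := n) k) leG.
case: (l0perm _) nz => [l|] // _.
by exists l; rewrite lgval_lay_exp.
Qed.
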